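(* Let $F$ be a field with $|F|\ge 4$, and let $G$ be a bipartite graph with $\mathcal{I}_F(G)\neq\emptyset$. Then for every positive integer $d$: $\mathcal{I}_F(G\Box Q_d)\neq\emptyset$, $f(G\Box Q_d)=2^{d-2}|V(G)|$, and $f(G\Box Q_d\Box C_{2k})=2^{d}|V(G)|$ for every integer $k\ge 2$.
   Context: All graphs are finite and simple. For a graph $H$ with a perfect matching $M$, a subset $S\subseteq M$ is a forcing set of $M$ if $S$ is contained in no other perfect matching of $H$; the forcing number $f(H,M)$ is the minimum size of a forcing set of $M$, and $f(H)$ is the minimum of $f(H,M)$ over all perfect matchings $M$ of $H$. A weighted adjacency matrix of a graph $G$ over a field $F$ is a matrix over $F$ with rows and columns indexed by $V(G)$ whose $(u,v)$ entry is nonzero iff $u$ and $v$ are adjacent in $G$. A matrix $A$ is involutory if $A^{-1}=A$. $\mathcal{I}_F(G)$ is the set of involutory weighted adjacency matrices of $G$ over $F$. $Q_d$ is the $d$-dimensional hypercube (vertex set $\{0,1\}^d$, two vectors adjacent iff they differ in exactly one coordinate). $C_{2k}$ is the cycle on $2k$ vertices. The Cartesian product $G\Box H$ has vertex set $V(G)\times V(H)$, with $(g_1,h_1)\sim(g_2,h_2)$ iff either $g_1=g_2$ and $h_1h_2\in E(H)$, or $h_1=h_2$ and $g_1g_2\in E(G)$. *)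

From mathcomp Require Import all_boot all_order all_algebra.
Set Implicit Arguments. Unset Strict Implicit. Unset Printing Implicit Defensive.
Import GRing.Theory.
Local Open Scope ring_scope.

Definition simple_graph (T : finType) (e : rel T) : Prop :=
  symmetric e /\ irreflexive e.

Definition bipartite (T : finType) (e : rel T) : Prop :=
  exists c : T -> bool, forall u v, e u v -> c u != c v.

Definition cart_prod (T U : finType) (eG : rel T) (eH : rel U) : rel (T * U) :=
  fun x y => ((x.1 == y.1) && eH x.2 y.2) || ((x.2 == y.2) && eG x.1 y.1).

Definition hypercube (d : nat) : rel {ffun 'I_d -> bool} :=
  fun x y => #|[set i | x i != y i]| == 1%N.

Arguments hypercube : clear implicits.

Definition cycle_graph (n : nat) : rel 'I_n :=
  fun i j => (val j == (val i + 1) %% n)%N || (val i == (val j + 1) %% n)%N.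

Arguments cycle_graph : clear implicits.

Definition weighted_adj (F : fieldType) (T : finType) (e : rel T)
  (A : 'M[F]_#|T|) : Prop :=
  forall u v, (A (enum_rank u) (enum_rank v) != 0) = e u v.

Definition involutory (F : fieldType) (n : nat) (A : 'M[F]_n) : Prop :=
  A *m A = 1%:M.

Definition in_IF (F : fieldType) (T : finType) (e : rel T) (A : 'M[F]_#|T|) : Prop :=
  weighted_adj e A /\ involutory A.

Definition IF_nonempty (F : fieldType) (T : finType) (e : rel T) : Prop :=
  exists A : 'M[F]_#|T|, in_IF e A.

Definition is_edge (T : finType) (e : rel T) (s : {set T}) : Prop :=
  exists u v, e u v /\ s = [set u; v].

Definition perfect_matching (T : finType) (e : rel T) (M : {set {set T}}) : Prop :=
  (forall s, s \in M -> is_edge e s) /\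
  (forall x : T, #|[set s in M | x \in s]| = 1%N).

Definition forcing_set (T : finType) (e : rel T) (M S : {set {set T}}) : Prop :=
  S \subset M /\
  (forall M', perfect_matching e M' -> S \subset M' -> M' = M).

Definition forcing_number_is (T : finType) (e : rel T) (n : nat) : Prop :=
  (exists M S, perfect_matching e M /\ forcing_set e M S /\ #|S| = n) /\
  (forall M S, perfect_matching e M -> forcing_set e M S -> (n <= #|S|)%N).

(* If S forces a perfect matching M of a bipartite graph H, the vertices not
   covered by S induce a subgraph whose only perfect matching is M minus S, so
   every weighted adjacency matrix A of H has a nonsingular principal submatrix
   of order |V(H)| - 2|S|: the forcing number is at least (|V(H)| - rank A) / 2.
   Write G □ Q_(d+1) = H □ K_2 with H = G □ Q_d. An involutory weighted
   adjacency matrix A of H gives the matrix [[A, I], [I, A]] of H □ K_2, of rank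
   |V(H)|, and for H □ C_2k an explicit matrix assembled from A and four
   distinct field elements has a left kernel of dimension 2|V(H)|. Explicit
   forcing sets meet these bounds: half of the K_2-rungs, resp. one rung in
   every C_2k-fibre. Involutory matrices climb the hypercube because
   [[aA, I], [(1 - a^2) I, -aA]] squares to I whenever A does, and a field with
   at least 4 elements has an a with a <> 0 and a^2 <> 1. *)

From mathcomp Require Import all_boot all_order all_algebra perm.
From mathcomp Require Import ring zify.

Set Implicit Arguments.
Unset Strict Implicit.
Unset Printing Implicit Defensive.
Import GRing.Theory.
Local Open Scope ring_scope.

(** * Matrices indexed by finite types *)

Section FunMatrix.
Variable F : fieldType.

Definition fun_mx (U V : finType) (f : U -> V -> F) : 'M[F]_(#|U|, #|V|) :=
  \matrix_(i, j) f (enum_val i) (enum_val j).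

Lemma fun_mxE (U V : finType) (f : U -> V -> F) u v :
  fun_mx f (enum_rank u) (enum_rank v) = f u v.
Proof. by rewrite mxE !enum_rankK. Qed.

Lemma fun_mxK (V : finType) (A : 'M[F]_#|V|) :
  fun_mx (fun u v => A (enum_rank u) (enum_rank v)) = A.
Proof. by apply/matrixP => i j; rewrite mxE !enum_valK. Qed.

Lemma mul_fun_mx (U V W : finType) (f : U -> V -> F) (g : V -> W -> F) :
  fun_mx f *m fun_mx g = fun_mx (fun u w => \sum_(v : V) f u v * g v w).
Proof.
apply/matrixP => i j; rewrite !mxE (big_enum_val (A := V)) /=.
by apply: eq_bigr => k _; rewrite !mxE.
Qed.

Lemma fun_mx_delta (V : finType) : fun_mx (fun u v : V => (u == v)%:R) = 1%:M.
Proof. by apply/matrixP => i j; rewrite !mxE (inj_eq enum_val_inj). Qed.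

Lemma sum_delta_l (V : finType) (u : V) (G : V -> F) :
  \sum_(w : V) (u == w)%:R * G w = G u.
Proof.
rewrite (bigD1 u) //= eqxx mul1r big1 ?addr0 // => w /negbTE.
by rewrite eq_sym => ->; rewrite mul0r.
Qed.

Lemma sum_delta_r (V : finType) (u : V) (G : V -> F) :
  \sum_(w : V) G w * (w == u)%:R = G u.
Proof.
rewrite (bigD1 u) //= eqxx mulr1 big1 ?addr0 // => w /negbTE ->.
by rewrite mulr0.
Qed.

Lemma sum_delta1 (V : finType) (G : V -> F) (v : V) (c : F) :
  \sum_(w : V) G w * ((w == v)%:R * c) = G v * c.
Proof. by under eq_bigr do rewrite mulrA mulrAC; apply: sum_delta_r. Qed.

Lemma sum_delta2 (V : finType) (G : V -> F) (v1 v2 : V) (c1 c2 : F) :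
  \sum_(w : V) G w * ((w == v1)%:R * c1 + (w == v2)%:R * c2) = G v1 * c1 + G v2 * c2.
Proof.
rewrite (eq_bigr (fun w => G w * c1 * (w == v1)%:R + G w * c2 * (w == v2)%:R)).
  by rewrite big_split !sum_delta_r.
by move=> w _; ring.
Qed.

Lemma rank_left_kernel (U V : finType) (K : U -> V -> F) (L : V -> V -> F)
    (R : V -> U -> F) :
  (forall u y, \sum_x K u x * L x y = 0) ->
  (forall u u', \sum_x K u x * R x u' = (u == u')%:R) ->
  (\rank (fun_mx L) + #|U| <= #|V|)%N.
Proof.
move=> KL KR.
have rank_K : \rank (fun_mx K) = #|U|.
  apply/eqP; rewrite eqn_leq rank_leq_row -{1}(mxrank1 F #|U|) -fun_mx_delta.
  have <- : fun_mx K *m fun_mx R = fun_mx (fun u u' : U => (u == u')%:R).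
    by rewrite mul_fun_mx; apply/matrixP => i j; rewrite !mxE KR.
  exact: mxrankM_maxl.
have : (fun_mx K <= kermx (fun_mx L))%MS.
  by apply/sub_kermxP; rewrite mul_fun_mx; apply/matrixP => i j; rewrite !mxE KL.
move/mxrankS; rewrite mxrank_ker rank_K; have := rank_leq_row (fun_mx L).
by move: (\rank _) => r; lia.
Qed.

Lemma rank_fun_mx_factor (V U : finType) (L : V -> V -> F)
    (P : V -> U -> F) (Q : U -> V -> F) :
  (forall x y, L x y = \sum_(u : U) P x u * Q u y) ->
  (\rank (fun_mx L) <= #|U|)%N.
Proof.
move=> defL; have -> : fun_mx L = fun_mx P *m fun_mx Q.
  by rewrite mul_fun_mx; apply/matrixP => i j; rewrite !mxE defL.
exact: leq_trans (mxrankM_maxl _ _) (rank_leq_col _).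
Qed.

Lemma rank_fun_mx_restrict (W V : finType) (f : W -> V) (L : V -> V -> F) :
  (\rank (fun_mx (fun a b => L (f a) (f b))) <= \rank (fun_mx L))%N.
Proof.
have -> : fun_mx (fun a b => L (f a) (f b)) =
    fun_mx (fun (a : W) (x : V) => (f a == x)%:R) *m fun_mx L
    *m fun_mx (fun (y : V) (b : W) => (y == f b)%:R).
  rewrite !mul_fun_mx; apply/matrixP => i j; rewrite !mxE.
  under eq_bigr do rewrite sum_delta_l.
  by rewrite sum_delta_r.
exact: leq_trans (mxrankM_maxl _ _) (mxrankM_maxr _ _).
Qed.

Lemma det_neq0_unique_transversal (W : finType) (g : W -> W -> F) (tau : W -> W) :
  injective tau -> (forall a, g a (tau a) != 0) ->
  (forall pi : W -> W, injective pi -> (forall a, g a (pi a) != 0) -> pi =1 tau) ->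
  \det (fun_mx g) != 0.
Proof.
move=> tau_inj g_tau tau_uniq.
have tau'_inj : injective (fun i : 'I_#|W| => enum_rank (tau (enum_val i))).
  by move=> i j /enum_rank_inj /tau_inj /enum_val_inj.
rewrite /determinant (bigD1 (perm tau'_inj)) //= [X in _ + X]big1 ?addr0; last first.
  move=> s /eqP s_tau; apply/eqP; rewrite mulf_eq0; apply/orP; right.
  apply/negPn/negP => /prodf_neq0 g_s.
  have s'_inj : injective (fun a => enum_val (s (enum_rank a))).
    by move=> a b /enum_val_inj /perm_inj /enum_rank_inj.
  have g_s' : forall a, g a (enum_val (s (enum_rank a))) != 0.
    by move=> a; have := g_s (enum_rank a) isT; rewrite mxE enum_rankK.
  have s_tau' := tau_uniq _ s'_inj g_s'.
  apply: s_tau; apply/permP => i.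
  by rewrite permE -s_tau' !enum_valK.
rewrite mulf_neq0 ?expf_neq0 ?oppr_eq0 ?oner_eq0 //.
by apply/prodf_neq0 => i _; rewrite mxE permE enum_rankK.
Qed.

End FunMatrix.

(** * Perfect matchings, forcing sets and graph isomorphisms *)

Definition two_colouring (V : finType) (e : rel V) (col : V -> bool) :=
  forall u v, e u v -> col u != col v.

Lemma two_colouring_irrefl (V : finType) (e : rel V) col :
  two_colouring e col -> irreflexive e.
Proof. by move=> ecol v; apply/negbTE/negP => /ecol; rewrite eqxx. Qed.

Lemma forcing_number_uniq (V : finType) (e : rel V) m n :
  forcing_number_is e m -> forcing_number_is e n -> m = n.
Proof.
move=> [[M [S [pmM [fS <-]]]] min_m] [[M' [S' [pmM' [fS' <-]]]] min_n].
by apply/eqP; rewrite eqn_leq (min_m M') // (min_n M).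
Qed.

Section PerfectMatching.
Variables (V : finType) (e : rel V).

Lemma perfect_matching_uniq M s t x : perfect_matching e M ->
  s \in M -> t \in M -> x \in s -> x \in t -> s = t.
Proof.
move=> [_ /(_ x) /eqP/cards1P [z defz]] sM tM xs xt.
have : s \in [set s in M | x \in s] by rewrite inE sM xs.
have : t \in [set s in M | x \in s] by rewrite inE tM xt.
by rewrite defz !in_set1 => /eqP -> /eqP ->.
Qed.

Lemma perfect_matching_cover M x : perfect_matching e M ->
  exists2 s, s \in M & x \in s.
Proof.
move=> [_ /(_ x) cardx].
have /card_gt0P [s] : (0 < #|[set s in M | x \in s]|)%N by rewrite cardx.
by rewrite inE => /andP [sM xs]; exists s.
Qed.

Lemma perfect_matchingI (M : {set {set V}}) :
  (forall s, s \in M -> is_edge e s) ->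
  (forall x, exists s0, forall s, (s \in M) && (x \in s) = (s == s0)) ->
  perfect_matching e M.
Proof.
move=> M_edge M_uniq; split=> // x; have [s0 defs0] := M_uniq x.
by apply/eqP/cards1P; exists s0; apply/setP => s; rewrite !inE defs0.
Qed.

Lemma perfect_matching_sub_eq M M' : perfect_matching e M ->
  perfect_matching e M' -> M \subset M' -> M' = M.
Proof.
move=> pmM pmM' sMM'; apply/eqP; rewrite eqEsubset sMM' andbT.
apply/subsetP => s sM'; have [u [v [_ defs]]] := pmM'.1 s sM'.
have [t tM ut] := perfect_matching_cover u pmM.
have tM' := subsetP sMM' t tM.
by rewrite (perfect_matching_uniq pmM' sM' tM' _ ut) // defs set21.
Qed.

Lemma is_edge_at s x : symmetric e -> is_edge e s -> x \in s ->
  exists y, s = [set x; y] /\ e x y.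
Proof.
move=> e_sym [u [v [euv ->]]] /set2P [] ->; first by exists v.
by exists u; rewrite setUC e_sym.
Qed.

Hypothesis e_sym : symmetric e.
Hypothesis e_irr : irreflexive e.

Lemma edge_neq u v : e u v -> u != v.
Proof. by apply: contraTneq => ->; rewrite e_irr. Qed.

Lemma is_edge_set2 x y : is_edge e [set x; y] -> e x y.
Proof.
move=> /(is_edge_at e_sym)/(_ (set21 x y)) [z [exyz exz]].
have /set2P [zx | <- //] : z \in [set x; y] by rewrite exyz set22.
by move: exz; rewrite zx e_irr.
Qed.

Lemma card_is_edge s : is_edge e s -> #|s| = 2%N.
Proof. by move=> [u [v [/edge_neq uv ->]]]; rewrite cards2 uv. Qed.

End PerfectMatching.

Section PullBack.
Variables (V1 V2 : finType) (e1 : rel V1) (e2 : rel V2).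
Variables (h : V1 -> V2) (g : V2 -> V1).
Hypotheses (hK : cancel h g) (gK : cancel g h).
Hypothesis h_mono : {mono h : x y / e1 x y >-> e2 x y}.

Definition pullm (M : {set {set V2}}) : {set {set V1}} := [set h @^-1: t | t : {set V2} in M].

Lemma preimset_set2 u v : h @^-1: [set u; v] = [set g u; g v].
Proof.
by apply/setP => x; rewrite !inE -!(can2_eq hK gK).
Qed.

Lemma preimset_inj : injective (fun t : {set V2} => h @^-1: t).
Proof.
move=> t t' /setP tt'; apply/setP => y.
by have := tt' (g y); rewrite !inE gK.
Qed.

Lemma card_pullm (M : {set {set V2}}) : #|pullm M| = #|M|.
Proof. exact/card_imset/preimset_inj. Qed.

Lemma perfect_matching_pull (M : {set {set V2}}) :
  perfect_matching e2 M -> perfect_matching e1 (pullm M).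
Proof.
move=> pmM; apply: perfect_matchingI.
  move=> _ /imsetP [t /pmM.1 [u [v [euv ->]]] ->].
  by exists (g u), (g v); rewrite preimset_set2 -h_mono !gK.
move=> x; have [t0 t0M xt0] := perfect_matching_cover (h x) pmM.
exists (h @^-1: t0) => s; apply/andP/eqP => [[/imsetP [t tM ->]] | ->].
  by rewrite inE => xt; rewrite (perfect_matching_uniq pmM tM t0M xt xt0).
by split; [apply: imset_f | rewrite inE].
Qed.

End PullBack.

Lemma pullmK (V1 V2 : finType) (h : V1 -> V2) (g : V2 -> V1) :
  cancel g h -> cancel (pullm h) (pullm g).
Proof.
move=> gK M; rewrite /pullm -imset_comp -[RHS]imset_id; apply: eq_imset => t.
by apply/setP => y; rewrite !inE gK.
Qed.

Lemma forcing_set_pull (V1 V2 : finType) (e1 : rel V1) (e2 : rel V2)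
    (h : V1 -> V2) (g : V2 -> V1) (M S : {set {set V2}}) :
  cancel h g -> cancel g h -> {mono h : x y / e1 x y >-> e2 x y} ->
  forcing_set e2 M S -> forcing_set e1 (pullm h M) (pullm h S).
Proof.
move=> hK gK h_mono [sSM forceS]; split; first exact: imsetS.
move=> M' pmM' sSM'; rewrite -(pullmK hK M') (forceS (pullm g M')) //.
  exact: (perfect_matching_pull gK hK (can_mono gK h_mono) pmM').
by rewrite -(pullmK gK S); apply: imsetS.
Qed.

Lemma forcing_number_pull (V1 V2 : finType) (e1 : rel V1) (e2 : rel V2)
    (h : V1 -> V2) (g : V2 -> V1) n :
  cancel h g -> cancel g h -> {mono h : x y / e1 x y >-> e2 x y} ->
  forcing_number_is e2 n -> forcing_number_is e1 n.
Proof.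
move=> hK gK h_mono [[M [S [pmM [fS <-]]]] min_n]; split.
  exists (pullm h M), (pullm h S); split.
    exact: (perfect_matching_pull hK gK h_mono pmM).
  by split; [exact: forcing_set_pull fS | rewrite (card_pullm gK)].
move=> M' S' pmM' fS'; rewrite -(card_pullm hK S').
have g_mono := can_mono gK h_mono.
apply: min_n (forcing_set_pull gK hK g_mono fS').
exact: (perfect_matching_pull gK hK g_mono pmM').
Qed.

(** * Forcing sets and ranks of weighted adjacency matrices *)

Section RankBound.
Variables (F : fieldType) (V : finType) (e : rel V) (col : V -> bool).
Hypotheses (ecol : two_colouring e col) (e_sym : symmetric e).
Variables (M S : {set {set V}}).
Hypotheses (pmM : perfect_matching e M) (fS : forcing_set e M S).

Let e_irr : irreflexive e := two_colouring_irrefl ecol.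

Definition partner x := odflt x [pick y | [set x; y] \in M].

Lemma partner_in x : [set x; partner x] \in M.
Proof.
have [s sM xs] := perfect_matching_cover x pmM.
have [y [defs _]] := is_edge_at e_sym (pmM.1 s sM) xs.
rewrite /partner; case: pickP => [z -> // | /(_ y)].
by rewrite -defs sM.
Qed.

Lemma partner_edge x : e x (partner x).
Proof. exact: (is_edge_set2 e_sym e_irr (pmM.1 _ (partner_in x))). Qed.

Lemma partner_uniq x y : [set x; y] \in M -> y = partner x.
Proof.
move=> xyM; have := perfect_matching_uniq pmM xyM (partner_in x) (set21 _ _) (set21 _ _).
move=> exy; have /set2P [yx | //] : y \in [set x; partner x] by rewrite -exy set22.
by have := is_edge_set2 e_sym e_irr (pmM.1 _ xyM); rewrite yx e_irr.
Qed.

Lemma partnerK : involutive partner.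
Proof. by move=> x; apply/esym/partner_uniq; rewrite setUC partner_in. Qed.

Definition uncovered := ~: cover S.

Lemma card_cover_forcing : #|cover S| = (2 * #|S|)%N.
Proof.
have sSM := subsetP fS.1.
have trivS : trivIset S.
  apply/trivIsetP => s t sS tS; rewrite -setI_eq0; apply: contraR.
  case/set0Pn => x /setIP [xs xt].
  by rewrite (perfect_matching_uniq pmM (sSM _ sS) (sSM _ tS) xs xt) eqxx.
move: trivS; rewrite -(leq_card_cover S).2 => /eqP ->.
rewrite (eq_bigr (fun _ => 2%N)).
  by rewrite sum_nat_const mulnC.
by move=> s sS; exact: (card_is_edge e_irr (pmM.1 _ (sSM _ sS))).
Qed.

Lemma partner_uncovered x : x \in uncovered -> partner x \in uncovered.
Proof.
rewrite !inE; apply: contra => /bigcupP [s sS pxs]; apply/bigcupP; exists s => //.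
rewrite (perfect_matching_uniq pmM (subsetP fS.1 _ sS) (partner_in x) pxs (set22 _ _)).
exact: set21.
Qed.

Section UncoveredTransversal.
Variable pi : {x | x \in uncovered} -> {x | x \in uncovered}.
Hypotheses (pi_inj : injective pi) (pi_edge : forall a, e (val a) (val (pi a))).

Definition transversal_matching b :=
  S :|: [set [set val a; val (pi a)] | a in [set a | col (val a) == b]].

Lemma col_pi a : col (val (pi a)) = ~~ col (val a).
Proof. by move: (ecol (pi_edge a)); case: (col _); case: (col _). Qed.

Lemma perfect_matching_transversal b :
  perfect_matching e (transversal_matching b).
Proof.
have sSM := subsetP fS.1.
apply: perfect_matchingI.
  move=> s /setUP [/sSM /pmM.1 // | /imsetP [a _ ->]].
  by exists (val a), (val (pi a)).
move=> y; case: (boolP (y \in uncovered)) => [yX | yC].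
  have [pi' piK pi'K] := injF_bij pi_inj.
  pose a0 : {x | x \in uncovered} := exist _ y yX.
  pose a := if col y == b then a0 else pi' a0.
  have col_a : col (val a) == b.
    rewrite /a; case: ifP => // /negbT; have := col_pi (pi' a0).
    by rewrite pi'K /= => ->; clear a; case: (col _); case: b.
  have y_a : y \in [set val a; val (pi a)].
    by rewrite /a; case: ifP; rewrite ?pi'K ?set21 ?set22.
  exists [set val a; val (pi a)] => s; apply/andP/eqP => [[] | ->]; last first.
    by split=> //; apply/setUP; right; apply: imset_f; rewrite inE.
  case/setUP => [sS ys | /imsetP [a' ]].
    by move: (yX); rewrite inE => /negP; case; apply/bigcupP; exists s.
  rewrite inE => /eqP col_a' -> /set2P [ya' | ya'].
    suff -> : a = a' by [].
    by rewrite /a ya' col_a' eqxx; apply: val_inj; rewrite /= ya'.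
  suff -> : a = a' by [].
  rewrite /a; have -> : (col y == b) = false by rewrite ya' col_pi col_a'; case: (b).
  by rewrite -(piK a'); congr pi'; apply: val_inj; rewrite /= ya'.
move: (yC); rewrite inE negbK => /bigcupP [s0 s0S ys0]; exists s0 => s.
apply/andP/eqP => [[/setUP [sS | /imsetP [a _ ->]] ys] | ->].
- exact: perfect_matching_uniq pmM (sSM _ sS) (sSM _ s0S) ys ys0.
- by case/set2P: ys yC => -> /negP[]; apply: valP.
- by rewrite inE s0S ys0.
Qed.

Lemma transversal_partner a : val (pi a) = partner (val a).
Proof.
apply: partner_uniq.
have <- : transversal_matching (col (val a)) = M.
  exact: fS.2 (perfect_matching_transversal _) (subsetUl _ _).
by apply/setUP; right; apply: imset_f; rewrite inE.
Qed.

End UncoveredTransversal.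

Lemma rank_forcing_bound (L : V -> V -> F) : (forall x y, (L x y != 0) = e x y) ->
  (#|V| <= \rank (fun_mx L) + 2 * #|S|)%N.
Proof.
move=> L_e; pose W := {x | x \in uncovered}.
pose tau (a : W) : W := exist _ (partner (val a)) (partner_uncovered (valP a)).
pose LW (a b : W) := L (val a) (val b).
have det_LW : \det (fun_mx LW) != 0.
  apply: (det_neq0_unique_transversal (tau := tau)).
  - by move=> a b /(congr1 (partner \o val)) /=; rewrite !partnerK => /val_inj.
  - by move=> a; rewrite /LW L_e partner_edge.
  move=> pi pi_inj pi_LW a; apply: val_inj => /=.
  by apply: (transversal_partner pi_inj) => b; rewrite -L_e; apply: pi_LW.
have rank_LW : \rank (fun_mx LW) = #|uncovered|.
  by rewrite mxrank_unit ?unitmxE ?unitfE // card_sig; apply: eq_card.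
rewrite -[X in (X <= _)%N](cardsC (cover S)) card_cover_forcing addnC leq_add2r.
rewrite -rank_LW; exact: rank_fun_mx_restrict.
Qed.

End RankBound.

(** * Products with K_2 and hypercubes *)

Definition inv_wadj (F : fieldType) (V : finType) (e : rel V) (a : V -> V -> F) :=
  (forall u v, (a u v != 0) = e u v) /\
  (forall u v, \sum_(w : V) a u w * a w v = (u == v)%:R).

Lemma IF_nonemptyP (F : fieldType) (V : finType) (e : rel V) :
  IF_nonempty F e <-> exists a : V -> V -> F, inv_wadj e a.
Proof.
split=> [[A [A_e A2]] | [a [a_e a2]]].
  exists (fun u v => A (enum_rank u) (enum_rank v)); split=> // u v.
  move: A2; rewrite /involutory -{1 2}(fun_mxK A) mul_fun_mx -fun_mx_delta.
  by move/matrixP/(_ (enum_rank u) (enum_rank v)); rewrite !fun_mxE.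
exists (fun_mx a); split=> [u v | ]; first by rewrite fun_mxE.
by rewrite /involutory mul_fun_mx -fun_mx_delta; apply/matrixP => i j; rewrite !mxE a2.
Qed.

Lemma inv_wadj_pull (F : fieldType) (V1 V2 : finType) (e1 : rel V1) (e2 : rel V2)
    (h : V1 -> V2) (g : V2 -> V1) (a : V2 -> V2 -> F) :
  cancel h g -> cancel g h -> {mono h : x y / e1 x y >-> e2 x y} ->
  inv_wadj e2 a -> inv_wadj e1 (fun x y => a (h x) (h y)).
Proof.
move=> hK gK h_mono [a_e a2]; split=> [x y | x y]; first by rewrite a_e h_mono.
rewrite -(inj_eq (can_inj hK)) -a2 (reindex h) //.
by exists g => z _; [apply: hK | apply: gK].
Qed.

Lemma exists_neq0_sqr_neq1 (F : fieldType) :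
  (exists s : seq F, uniq s /\ (4 <= size s)%N) ->
  exists al : F, al != 0 /\ 1 - al ^+ 2 != 0.
Proof.
move=> [s [s_uniq s_size]].
have /hasP [x _ /andP [x0 x1]] : has (fun x : F => (x != 0) && (1 - x ^+ 2 != 0)) s.
  apply: contraTT s_size => /hasPn s_small; rewrite -ltnNge ltnS.
  apply: (uniq_leq_size (s2 := [:: 0; 1; -1])) => // x /s_small.
  rewrite negb_and !negbK subr_eq0 [1 == _]eq_sym sqrf_eq1 !inE.
  by case/orP=> [-> | /orP [] ->]; rewrite ?orbT.
by exists x.
Qed.

Definition K2 : rel bool := fun b b' => b != b'.

Lemma cart_prod_sym (T U : finType) (eT : rel T) (eU : rel U) :
  symmetric eT -> symmetric eU -> symmetric (cart_prod eT eU).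
Proof.
by move=> symT symU [x1 x2] [y1 y2]; rewrite /cart_prod /= symT symU !(eq_sym x1) (eq_sym x2).
Qed.

Lemma K2_sym : symmetric K2.
Proof. by move=> b b'; rewrite /K2 eq_sym. Qed.

Lemma K2_irr : irreflexive K2.
Proof. by move=> b; rewrite /K2 eqxx. Qed.

Lemma two_colouring_K2 (V : finType) (e : rel V) col : two_colouring e col ->
  two_colouring (cart_prod e K2) (fun p => col p.1 (+) p.2).
Proof.
move=> ecol [u b] [v b']; rewrite /cart_prod /K2 /=.
case/orP => [/andP [/eqP -> bb'] | /andP [/eqP -> /ecol]].
  by move: bb'; case: b; case: b'; case: (col v).
by case: b'; case: (col u); case: (col v).
Qed.

Lemma nat_bool_neq0 (F : fieldType) (b : bool) : ((b%:R : F) != 0) = b.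
Proof. by case: b; rewrite ?oner_eq0 ?eqxx. Qed.

Section Kronecker.
Variables (F : fieldType) (V : finType) (a : V -> V -> F).

(* (P ⊗ A) + (Q ⊗ I), rows indexed by V * U1 and columns by V * U2, where A is
   the matrix of a. *)
Definition kronAI (U1 U2 : finType) (P Q : U1 -> U2 -> F) (x : V * U1) (y : V * U2) :=
  P x.2 y.2 * a x.1 y.1 + Q x.2 y.2 * (x.1 == y.1)%:R.

Lemma kronAI_cart_prod (U : finType) (e : rel V) (eU : rel U) (P Q : U -> U -> F) :
  irreflexive eU -> (forall u v, (a u v != 0) = e u v) ->
  (forall b b', (P b b' != 0) = (b == b')) -> (forall b b', (Q b b' != 0) = eU b b') ->
  forall x y, (kronAI P Q x y != 0) = cart_prod e eU x y.
Proof.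
move=> eU_irr a_e P_diag Q_eU [u b] [v b']; rewrite /kronAI /cart_prod /=.
have [<- | /negbTE bb'] := eqVneq b b'.
  have /eqP -> : Q b b == 0 by rewrite -[_ == 0]negbK Q_eU eU_irr.
  by rewrite mul0r addr0 mulf_eq0 negb_or P_diag eqxx a_e eU_irr andbF.
have /eqP -> : P b b' == 0 by rewrite -[_ == 0]negbK P_diag bb'.
by rewrite mul0r add0r mulf_eq0 negb_or nat_bool_neq0 Q_eU andbC orbF.
Qed.

Hypothesis a2 : forall u v, \sum_(w : V) a u w * a w v = (u == v)%:R.

Lemma mul_kronAI (U1 U2 U3 : finType) (P Q : U1 -> U2 -> F) (P' Q' : U2 -> U3 -> F) x y :
  \sum_z kronAI P Q x z * kronAI P' Q' z y =
    (\sum_b (P x.2 b * P' b y.2 + Q x.2 b * Q' b y.2)) * (x.1 == y.1)%:R +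
    (\sum_b (P x.2 b * Q' b y.2 + Q x.2 b * P' b y.2)) * a x.1 y.1.
Proof.
rewrite -(pair_big xpredT xpredT (fun w b => kronAI P Q x (w, b) * kronAI P' Q' (w, b) y)).
rewrite /= exchange_big !mulr_suml -big_split; apply: eq_bigr => b _ /=.
rewrite /kronAI /=.
set p := P x.2 b; set q := Q x.2 b; set p' := P' b y.2; set q' := Q' b y.2.
rewrite (eq_bigr (fun w => p * p' * (a x.1 w * a w y.1) + p * q' * (a x.1 w * (w == y.1)%:R)
    + q * p' * ((x.1 == w)%:R * a w y.1) + q * q' * ((x.1 == w)%:R * (w == y.1)%:R)));
  last by move=> w _; ring.
rewrite !big_split -!mulr_sumr /= a2 sum_delta_r !sum_delta_l; ring.
Qed.

End Kronecker.

Section ProductWithK2.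
Variables (F : fieldType) (V : finType) (e : rel V) (a : V -> V -> F).
Hypothesis a_inv : inv_wadj e a.

Definition wadj_K2 (al : F) := kronAI a
  (fun b b' : bool => (b == b')%:R * (if b then - al else al))
  (fun b b' : bool => (b != b')%:R * (if b then 1 - al ^+ 2 else 1)).

Lemma inv_wadj_K2 al : al != 0 -> 1 - al ^+ 2 != 0 ->
  inv_wadj (cart_prod e K2) (wadj_K2 al).
Proof.
case: a_inv => a_e a2 al0 al1; split.
  apply: kronAI_cart_prod K2_irr a_e _ _ => b b'; case: b; case: b' => /=;
    by rewrite ?mulf_eq0 ?negb_or ?oppr_eq0 ?oner_eq0 ?eqxx ?al0 ?al1.
move=> [u b] [v b']; rewrite mul_kronAI // !big_bool /= xpair_eqE.
by case: b; case: b'; rewrite /= ?andbT ?andbF ?mulr0n; ring.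
Qed.

End ProductWithK2.

Section ForcingK2.
Variables (V : finType) (e : rel V) (col : V -> bool).
Hypotheses (ecol : two_colouring e col) (e_sym : symmetric e).

Let eK2_sym : symmetric (cart_prod e K2) := cart_prod_sym e_sym K2_sym.

Definition rung (v : V) : {set V * bool} := [set (v, false); (v, true)].
Definition rungs := [set rung v | v in V].
Definition rungs_of b := [set rung v | v in [set v | col v == b]].

Lemma in_rung x v : (x \in rung v) = (x.1 == v).
Proof. by case: x => u [|]; rewrite !inE !xpair_eqE /= ?andbT ?andbF ?orbF. Qed.

Lemma rung_inj : injective rung.
Proof. by move=> v w /setP /(_ (v, false)); rewrite !in_rung eqxx => /esym /eqP. Qed.

Lemma perfect_matching_rungs : perfect_matching (cart_prod e K2) rungs.
Proof.
apply: perfect_matchingI => [_ /imsetP [v _ ->] | x].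
  by exists (v, false), (v, true); rewrite /cart_prod /K2 /= eqxx.
exists (rung x.1) => s; apply/andP/eqP => [[/imsetP [v _ ->]] | ->].
  by rewrite in_rung => /eqP ->.
by rewrite imset_f // in_rung.
Qed.

Lemma forcing_rungs_of b : forcing_set (cart_prod e K2) rungs (rungs_of b).
Proof.
split; first by apply: imsetS; apply: subset_predT.
move=> M pmM sSM; apply: (perfect_matching_sub_eq perfect_matching_rungs pmM).
apply/subsetP => _ /imsetP [v _ ->].
have [cv | ncv] := eqVneq (col v) b.
  by apply: (subsetP sSM); apply: imset_f; rewrite inE cv.
have [s sM vs] := perfect_matching_cover (v, false) pmM.
have [[w c] [defs]] := is_edge_at eK2_sym (pmM.1 s sM) vs.
rewrite /cart_prod /K2 /= => /orP [/andP [/eqP vw] | /andP [/eqP cf evw]].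
  by subst w; case: c defs => // defs _; rewrite /rung -defs.
subst c.
have w_rung : rung w \in M.
  apply: (subsetP sSM); apply: imset_f; rewrite inE.
  by move: (ecol evw) ncv; case: (col v); case: (col w); case: (b).
have s_w : s = rung w.
  by apply: (perfect_matching_uniq (x := (w, false)) pmM sM w_rung);
    rewrite ?defs ?set22 ?in_rung.
by move: vs (ecol evw); rewrite s_w in_rung /= => /eqP ->; rewrite eqxx.
Qed.

Lemma card_rungs_of : (#|rungs_of false| + #|rungs_of true| = #|V|)%N.
Proof.
rewrite !card_imset; try exact: rung_inj.
rewrite -(cardsC [set v | col v == false]); congr addn.
by apply: eq_card => v; rewrite !inE; case: (col v).
Qed.

Variables (F : fieldType) (a : V -> V -> F).
Hypothesis a_inv : inv_wadj e a.

Definition swap_wadj := kronAI a (fun b b' : bool => (b == b')%:R) (fun b b' => (K2 b b')%:R).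

(* [[A, I], [I, A]] = [A; I] * [I, A] since A^2 = I. *)
Lemma rank_swap_wadj_le : (\rank (fun_mx swap_wadj) <= #|V|)%N.
Proof.
case: a_inv => _ a2.
apply: (rank_fun_mx_factor (P := fun x w => if x.2 then a x.1 w else (x.1 == w)%:R)
  (Q := fun w y => if y.2 then (w == y.1)%:R else a w y.1)) => -[u b] [v b'].
rewrite /swap_wadj /kronAI /K2; case: b; case: b' => /=;
  rewrite ?mulr1n ?mulr0n !(mul1r, mul0r);
  by rewrite ?addr0 ?add0r ?mulr1 ?sum_delta_r ?sum_delta_l ?a2.
Qed.

Lemma forcing_set_K2_ge M S : perfect_matching (cart_prod e K2) M ->
  forcing_set (cart_prod e K2) M S -> (#|V| <= 2 * #|S|)%N.
Proof.
move=> pmM fS.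
have L_e : forall x y, (swap_wadj x y != 0) = cart_prod e K2 x y.
  exact: kronAI_cart_prod K2_irr a_inv.1
    (fun _ _ => nat_bool_neq0 _ _) (fun _ _ => nat_bool_neq0 _ _).
have := rank_forcing_bound (two_colouring_K2 ecol) eK2_sym pmM fS L_e.
have := rank_swap_wadj_le; move: (\rank _) => r.
by rewrite card_prod card_bool; lia.
Qed.

Lemma forcing_number_K2 :
  exists2 n, forcing_number_is (cart_prod e K2) n & (2 * n = #|V|)%N.
Proof.
have ge_f := forcing_set_K2_ge perfect_matching_rungs (forcing_rungs_of false).
have ge_t := forcing_set_K2_ge perfect_matching_rungs (forcing_rungs_of true).
have card_f : (2 * #|rungs_of false| = #|V|)%N.
  by move: ge_f ge_t card_rungs_of; move: #|rungs_of _| #|rungs_of _| => f t; lia.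
exists #|rungs_of false| => //; split.
  exists rungs, (rungs_of false); split; first exact: perfect_matching_rungs.
  by split; first exact: forcing_rungs_of.
by move=> M S pmM fS; have := forcing_set_K2_ge pmM fS; lia.
Qed.

End ForcingK2.

Lemma two_colouring_pull (V1 V2 : finType) (e1 : rel V1) (e2 : rel V2)
    (h : V1 -> V2) col :
  {mono h : x y / e1 x y >-> e2 x y} -> two_colouring e2 col -> two_colouring e1 (col \o h).
Proof. by move=> h_mono ecol x y; rewrite -h_mono => /ecol. Qed.

Lemma hypercube_sym d : symmetric (hypercube d).
Proof.
by move=> x y; rewrite /hypercube; congr (_ == _); apply: eq_card => i; rewrite !inE eq_sym.
Qed.

Section HypercubeSplit.
Variable d : nat.

Definition ftail (x : {ffun 'I_d.+1 -> bool}) : {ffun 'I_d -> bool} :=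
  [ffun j => x (lift ord0 j)].
Definition fcons (b : bool) (x : {ffun 'I_d -> bool}) : {ffun 'I_d.+1 -> bool} :=
  [ffun i => if unlift ord0 i is Some j then x j else b].

Lemma fconsK (x : {ffun 'I_d.+1 -> bool}) : fcons (x ord0) (ftail x) = x.
Proof.
apply/ffunP => i; rewrite ffunE.
by case: (unliftP ord0 i) => [j -> | ->]; rewrite ?ffunE.
Qed.

Lemma ftail_fcons b x : ftail (fcons b x) = x.
Proof. by apply/ffunP => j; rewrite !ffunE liftK. Qed.

Lemma fcons_ord0 b x : fcons b x ord0 = b.
Proof. by rewrite ffunE unlift_none. Qed.

Lemma card_diff_ffunS (x y : {ffun 'I_d.+1 -> bool}) :
  #|[set i | x i != y i]| = ((x ord0 != y ord0) + #|[set j | ftail x j != ftail y j]|)%N.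
Proof.
rewrite -!sum1_card big_mkcond [in RHS]big_mkcond big_ord_recl /= !inE.
by congr addn; apply: eq_bigr => j _; rewrite !inE !ffunE.
Qed.

Lemma card_diff_ffun_eq0 (x y : {ffun 'I_d -> bool}) :
  (#|[set j | x j != y j]| == 0%N) = (x == y).
Proof.
rewrite cards_eq0; apply/eqP/eqP => [/setP xy | ->].
  by apply/ffunP => j; have := xy j; rewrite !inE => /negbFE /eqP.
by apply/setP => j; rewrite !inE eqxx.
Qed.

Lemma ffun_eqS (x y : {ffun 'I_d.+1 -> bool}) :
  (x == y) = (x ord0 == y ord0) && (ftail x == ftail y).
Proof.
apply/eqP/andP => [-> // | [/eqP x0 /eqP xy]].
by rewrite -(fconsK x) -(fconsK y) x0 xy.
Qed.

Variables (T : finType) (e : rel T).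

Definition hsplit (x : T * {ffun 'I_d.+1 -> bool}) := ((x.1, ftail x.2), x.2 ord0).
Definition hjoin (y : (T * {ffun 'I_d -> bool}) * bool) := (y.1.1, fcons y.2 y.1.2).

Lemma hsplitK : cancel hsplit hjoin.
Proof. by move=> [u x]; rewrite /hsplit /hjoin /= fconsK. Qed.

Lemma hjoinK : cancel hjoin hsplit.
Proof. by move=> [[u x] b]; rewrite /hsplit /hjoin /= ftail_fcons fcons_ord0. Qed.

Lemma hsplit_mono : {mono hsplit : x y /
  cart_prod e (hypercube d.+1) x y >-> cart_prod (cart_prod e (hypercube d)) K2 x y}.
Proof.
move=> [u x] [v y]; rewrite /cart_prod /hsplit /hypercube /K2 /= card_diff_ffunS.
rewrite ffun_eqS xpair_eqE -card_diff_ffun_eq0.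
case: (u == v); case: (x ord0 == y ord0); case: (e u v); rewrite /= ?andbT ?andbF ?orbF //=;
  by case: #|[set j | _ ]| => [|[|m]].
Qed.

End HypercubeSplit.

Lemma hypercube0_mono (T : finType) (e : rel T) :
  {mono fst : x y / cart_prod e (hypercube 0) x y >-> e x y}.
Proof.
move=> x y; rewrite /cart_prod /hypercube.
have -> : x.2 == y.2 by apply/eqP/ffunP => -[].
suff -> : [set i | x.2 i != y.2 i] = set0 by rewrite cards0 andbF.
by apply/setP => -[].
Qed.

Section HypercubeProduct.
Variables (T : finType) (e : rel T).

Lemma cart_hypercube_sym d : symmetric e -> symmetric (cart_prod e (hypercube d)).
Proof. by move=> e_sym; apply: (cart_prod_sym e_sym (@hypercube_sym d)). Qed.

Lemma two_colouring_hypercube col : two_colouring e col ->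
  forall d, exists c, two_colouring (cart_prod e (hypercube d)) c.
Proof.
move=> ecol; elim=> [|d [c ec]].
  by exists (col \o fst); apply: two_colouring_pull (hypercube0_mono e) ecol.
by eexists; apply: two_colouring_pull (hsplit_mono e) (two_colouring_K2 ec).
Qed.

Lemma inv_wadj_hypercube (F : fieldType) (a : T -> T -> F) (al : F) :
  inv_wadj e a -> al != 0 -> 1 - al ^+ 2 != 0 ->
  forall d, exists a' : _ -> _ -> F, inv_wadj (cart_prod e (hypercube d)) a'.
Proof.
move=> a_inv al0 al1; elim=> [|d [a' a'_inv]].
  pose g (u : T) : T * {ffun 'I_0 -> bool} := (u, [ffun => false]).
  have fstK : cancel fst g by move=> [u x]; congr pair; apply/ffunP => -[].
  exists (fun x y => a x.1 y.1).
  exact: inv_wadj_pull fstK (fun _ => erefl) (hypercube0_mono e) a_inv.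
exists (fun x y => wadj_K2 a' al (hsplit x) (hsplit y)).
exact: inv_wadj_pull (@hsplitK d T) (@hjoinK d T) (hsplit_mono e) (inv_wadj_K2 a'_inv al0 al1).
Qed.

Lemma forcing_number_hypercubeS (F : fieldType) d c (a : _ -> _ -> F) :
  symmetric e -> two_colouring (cart_prod e (hypercube d)) c ->
  inv_wadj (cart_prod e (hypercube d)) a ->
  exists2 n, forcing_number_is (cart_prod e (hypercube d.+1)) n & (2 * n = 2 ^ d * #|T|)%N.
Proof.
move=> e_sym ec a_inv.
have [n fn n_card] := forcing_number_K2 ec (cart_hypercube_sym (d := d) e_sym) a_inv.
exists n; first exact: forcing_number_pull (@hsplitK d T) (@hjoinK d T) (hsplit_mono e) fn.
by rewrite n_card card_prod card_ffun card_bool card_ord mulnC.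
Qed.

End HypercubeProduct.

(** * Products with even cycles *)

Section CycleIndex.
Variable N : nat.

Lemma val_ordS (i : 'I_N) : val (ordS i) = if i.+1 == N then 0%N else i.+1.
Proof.
rewrite /=; case: eqP => [-> | ne]; first by rewrite modnn.
by rewrite modn_small //; have := ltn_ord i; lia.
Qed.

Lemma val_ord_pred (i : 'I_N) : (0 < i)%N -> val (ord_pred i) = i.-1.
Proof.
move=> i_gt0; rewrite /= (_ : (i + N).-1 = i.-1 + N)%N; last by lia.
by rewrite modnDr modn_small //; have := ltn_ord i; lia.
Qed.

Lemma odd_ordS (i : 'I_N) : ~~ odd N -> odd (ordS i) = ~~ odd i.
Proof.
move=> N_even; rewrite val_ordS; case: eqP => [iN | _] //=.
by move: N_even; rewrite -[in odd N]iN /= negbK => ->.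
Qed.

Lemma odd_ord_pred (i : 'I_N) : ~~ odd N -> odd (ord_pred i) = ~~ odd i.
Proof. by move=> N_even; rewrite -{2}(ord_predK i) odd_ordS ?negbK. Qed.

Lemma ordS_neq (i : 'I_N) : (1 < N)%N -> (ordS i == i) = false.
Proof. by move=> N1; apply/negbTE; rewrite -val_eqE val_ordS /=; case: ifP => /eqP; lia. Qed.

Lemma ordS2_neq (i : 'I_N) : (2 < N)%N -> (ordS (ordS i) == i) = false.
Proof.
move=> N2; apply/negbTE; rewrite -val_eqE !val_ordS /=; have := ltn_ord i.
by case: ifP => /eqP; case: ifP => /eqP; lia.
Qed.

Lemma cycle_graphE (i j : 'I_N) : cycle_graph N i j = (j == ordS i) || (i == ordS j).
Proof. by rewrite /cycle_graph !addn1. Qed.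

Lemma cycle_graph_irr : (1 < N)%N -> irreflexive (cycle_graph N).
Proof. by move=> N1 i; rewrite cycle_graphE eq_sym ordS_neq. Qed.

Lemma cycle_graph_sym : symmetric (cycle_graph N).
Proof. by move=> i j; rewrite !cycle_graphE orbC. Qed.

(* Colours 0,1,2,3,0,1,2,3,... around the cycle, preceded by 0,1,2,0,1,2 when
   N = 2 mod 4, so that any three consecutive vertices get distinct colours. *)
Definition cycle_colour (j : nat) : nat :=
  (if (N %% 4 == 2) && (j < 6) then j %% 3
   else (j - (if N %% 4 == 2 then 6 else 0)) %% 4)%N.

Lemma cycle_colour_lt j : (cycle_colour j < 4)%N.
Proof. rewrite /cycle_colour; case: ifP => _; lia. Qed.

Lemma cycle_colour_triple (j : 'I_N) : (4 <= N)%N -> ~~ odd N ->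
  [&& cycle_colour j != cycle_colour (ordS j),
      cycle_colour (ordS j) != cycle_colour (ordS (ordS j)) &
      cycle_colour j != cycle_colour (ordS (ordS j))].
Proof.
move=> N4 N_even; have N2 : (N %% 2 = 0)%N by rewrite modn2; case: (odd N) N_even.
rewrite !val_ordS /cycle_colour; have := ltn_ord j.
case: (j.+1 =P N) => [jN | jN].
  rewrite (_ : (1 == N)%N = false) /=; last by apply/eqP; lia.
  by case H4: (N %% 4 == 2)%N; case H6: (j < 6)%N; rewrite /=; lia.
by case: (j.+2 =P N) => [jN2 | jN2] /=; case H4: (N %% 4 == 2)%N;
  case H6: (j < 6)%N; case H6': (j.+1 < 6)%N; case H6'': (j.+2 < 6)%N; rewrite /=; lia.
Qed.

End CycleIndex.

Section CycleMatching.
Variables (N : nat) (V : finType) (e : rel V) (col : V -> bool).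
Hypotheses (N4 : (4 <= N)%N) (N_even : ~~ odd N).
Hypotheses (ecol : two_colouring e col) (e_sym : symmetric e).

Let eC_sym : symmetric (cart_prod e (cycle_graph N)) :=
  cart_prod_sym e_sym (@cycle_graph_sym N).
Let o0 : 'I_N := Ordinal (leq_trans (isT : 0 < 4)%N N4).
Let o1 : 'I_N := Ordinal (leq_trans (isT : 1 < 4)%N N4).

Definition cycle_pair (u : V) (j : 'I_N) : {set V * 'I_N} := [set (u, j); (u, ordS j)].
Definition cycle_matching :=
  [set cycle_pair x.1 x.2 | x in [set x : V * 'I_N | odd x.2 == col x.1]].
Definition cycle_forcing := [set cycle_pair u (if col u then o1 else o0) | u in V].

Lemma in_cycle_pair y u j :
  (y \in cycle_pair u j) = (y.1 == u) && ((y.2 == j) || (y.2 == ordS j)).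
Proof. by case: y => w k; rewrite !inE !xpair_eqE /=; case: (w == u). Qed.

Lemma card_cycle_forcing : #|cycle_forcing| = #|V|.
Proof.
rewrite /cycle_forcing card_imset // => u v /setP /(_ (u, if col u then o1 else o0)).
by rewrite !in_cycle_pair /= !eqxx /= => /esym /andP [/eqP].
Qed.

Lemma perfect_matching_cycle : perfect_matching (cart_prod e (cycle_graph N)) cycle_matching.
Proof.
apply: perfect_matchingI => [_ /imsetP [[u j] _ ->] | [u j]].
  by exists (u, j), (u, ordS j); rewrite /cart_prod cycle_graphE /= !eqxx.
exists (if odd j == col u then cycle_pair u j else cycle_pair u (ord_pred j)) => s.
apply/andP/eqP => [[/imsetP [[w k]]] | ->].
  rewrite inE /= => ck -> /[!in_cycle_pair] /= /andP [/eqP uw jk]; subst w.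
  case/orP: jk => /eqP ->; first by rewrite ck.
  rewrite ordSK odd_ordS // (_ : (~~ odd k == col u) = false) //.
  by move: ck; case: (odd k); case: (col u).
case: ifP => cj; split; rewrite ?in_cycle_pair /= ?ord_predK ?eqxx ?orbT //.
  by apply/imsetP; exists (u, j); rewrite ?inE.
apply/imsetP; exists (u, ord_pred j); rewrite // inE /= odd_ord_pred //.
by move: cj; case: (odd j); case: (col u).
Qed.

Section Forced.
Variable M : {set {set V * 'I_N}}.
Hypotheses (pmM : perfect_matching (cart_prod e (cycle_graph N)) M).
Hypothesis forcing_sub : cycle_forcing \subset M.

Lemma cycle_pair_start_forced u (j : 'I_N) : (j <= 1)%N -> odd j == col u ->
  cycle_pair u j \in M.
Proof.
move=> j_le1 cj; apply: (subsetP forcing_sub); apply/imsetP; exists u => //.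
congr cycle_pair; move: j_le1 cj; case: (col u); case: j => [[|[|m]] ?] //= _ _;
  exact: val_inj.
Qed.

(* A vertex (u, j) is matched forward: matching it backwards, or across to
   (w, j), clashes with a pair that is forced by induction on j. *)
Lemma cycle_pair_forced u (j : 'I_N) : odd j == col u -> cycle_pair u j \in M.
Proof.
suff forced n : forall u (j : 'I_N), (j <= n)%N -> odd j == col u -> cycle_pair u j \in M.
  exact: forced.
elim: n => [|n IH] {}u {}j jn cj; have [j_le1 | j_gt1] := leqP j 1.
- exact: cycle_pair_start_forced.
- lia.
- exact: cycle_pair_start_forced.
have [s sM js] := perfect_matching_cover (u, j) pmM.
have [[w k] [defs]] := is_edge_at eC_sym (pmM.1 s sM) js.
rewrite /cart_prod cycle_graphE /=.
case/orP => [/andP [/eqP uw /orP [/eqP kj | /eqP jk]] | /andP [/eqP jk euw]].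
- by subst w k; rewrite /cycle_pair -defs.
- subst w; have kE : k = ord_pred j by rewrite jk ordSK.
  have k_gt0 : (0 < k)%N by rewrite kE val_ord_pred //; lia.
  have pk_in : cycle_pair u (ord_pred k) \in M.
    apply: IH; last by rewrite odd_ord_pred // -odd_ordS // -jk.
    by rewrite !val_ord_pred // kE val_ord_pred //; lia.
  have s_pk : s = cycle_pair u (ord_pred k).
    apply: (perfect_matching_uniq (x := (u, k)) pmM sM pk_in).
      by rewrite defs set22.
    by rewrite in_cycle_pair /= ord_predK !eqxx orbT.
  move: js; rewrite s_pk in_cycle_pair /= eqxx /= jk ord_predK.
  have N2 : (2 < N)%N by apply: leq_trans N4.
  by rewrite -(can2_eq (@ordSK N) (@ord_predK N)) ordS2_neq ?ordS_neq // ltnW.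
subst k; have pj_in : cycle_pair w (ord_pred j) \in M.
  apply: IH; first by rewrite val_ord_pred //; lia.
  by move: (ecol euw) cj; rewrite odd_ord_pred //; case: (odd j); case: (col u); case: (col w).
have s_pj : s = cycle_pair w (ord_pred j).
  apply: (perfect_matching_uniq (x := (w, j)) pmM sM pj_in).
    by rewrite defs set22.
  by rewrite in_cycle_pair /= ord_predK !eqxx orbT.
move: js euw; rewrite s_pj in_cycle_pair /= => /andP [/eqP -> _].
by rewrite (two_colouring_irrefl ecol).
Qed.

End Forced.

Lemma forcing_cycle :
  forcing_set (cart_prod e (cycle_graph N)) cycle_matching cycle_forcing.
Proof.
split=> [|M pmM sub].
  apply/subsetP => _ /imsetP [u _ ->]; apply/imsetP.
  by exists (u, if col u then o1 else o0); rewrite // inE /=; case: (col u).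
apply: (perfect_matching_sub_eq perfect_matching_cycle pmM).
apply/subsetP => _ /imsetP [[u j] /[!inE] cj ->].
exact: cycle_pair_forced.
Qed.

End CycleMatching.

Section CycleProduct.
Variables (N : nat) (F : fieldType) (V : finType) (e : rel V) (a : V -> V -> F).
Variables (col : V -> bool) (s : seq F).
Hypotheses (N4 : (4 <= N)%N) (N_even : ~~ odd N).
Hypotheses (s_uniq : uniq s) (s_size : (4 <= size s)%N).
Hypotheses (a_inv : inv_wadj e a) (ecol : two_colouring e col) (e_sym : symmetric e).

Let o0 : 'I_N := Ordinal (leq_trans (isT : 0 < 4)%N N4).
Let o2 : 'I_N := Ordinal (leq_trans (isT : 2 < 4)%N N4).

Definition label (j : 'I_N) : F := nth 0 s (cycle_colour N j).

Lemma label_neq (i j : 'I_N) : cycle_colour N i != cycle_colour N j -> label i != label j.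
Proof. by rewrite /label nth_uniq // (leq_trans (cycle_colour_lt _ _)). Qed.

Lemma label_triple (j : 'I_N) :
  [&& label (ord_pred j) != label j, label j != label (ordS j)
    & label (ord_pred j) != label (ordS j)].
Proof.
have := cycle_colour_triple (ord_pred j) N4 N_even; rewrite ord_predK.
by case/and3P => *; rewrite !label_neq.
Qed.

(* (coef_self j, coef_pred j, coef_succ j) is orthogonal to (1, 1, 1) and to
   (label j, label (ord_pred j), label (ordS j)); this makes cycle_kernel a left
   kernel of cycle_wadj. *)
Definition coef_self j := label (ord_pred j) - label (ordS j).
Definition coef_pred j := label (ordS j) - label j.
Definition coef_succ j := label j - label (ord_pred j).

Lemma coef_self_neq0 j : coef_self j != 0.
Proof. by rewrite subr_eq0; case/and3P: (label_triple j). Qed.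
Lemma coef_pred_neq0 j : coef_pred j != 0.
Proof. by rewrite subr_eq0 eq_sym; case/and3P: (label_triple j). Qed.
Lemma coef_succ_neq0 j : coef_succ j != 0.
Proof. by rewrite subr_eq0 eq_sym; case/and3P: (label_triple j). Qed.

Definition cycle_wadj := kronAI a (fun i j : 'I_N => (i == j)%:R * coef_self j)
  (fun i j => (i == ord_pred j)%:R * coef_pred j + (i == ordS j)%:R * coef_succ j).

Lemma cycle_wadj_cart_prod x y :
  (cycle_wadj x y != 0) = cart_prod e (cycle_graph N) x y.
Proof.
have N1 : (1 < N)%N by apply: leq_trans N4.
apply: kronAI_cart_prod (cycle_graph_irr N1) a_inv.1 _ _ x y => i j.
  by rewrite mulf_eq0 negb_or nat_bool_neq0 coef_self_neq0 andbT.
rewrite cycle_graphE -(can2_eq (@ordSK N) (@ord_predK N)); have [-> | ij] := eqVneq j (ordS i).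
  rewrite (eq_sym i) ordS2_neq ?(leq_trans _ N4) //= mul1r mul0r addr0.
  exact: coef_pred_neq0.
by rewrite mul0r add0r mulf_eq0 negb_or nat_bool_neq0 coef_succ_neq0 andbT.
Qed.

Definition cycle_kernel := kronAI a
  (fun (t : bool) j => label j ^+ t * (odd j)%:R) (fun t j => label j ^+ t * (~~ odd j)%:R).

Lemma cycle_kernelP u y : \sum_x cycle_kernel u x * cycle_wadj x y = 0.
Proof.
move: u y => [x t] [v j]; rewrite (mul_kronAI a_inv.2) /= !big_split /=.
rewrite !sum_delta1 !sum_delta2 /= odd_ord_pred ?odd_ordS // /coef_self /coef_pred /coef_succ.
by case: t; case: (odd j); rewrite /= ?mulr1n ?mulr0n; ring.
Qed.

Lemma label20_neq0 : label o2 - label o0 != 0.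
Proof.
have := label_triple (ordS o0); rewrite ordSK.
have -> : ordS (ordS o0) = o2.
  by apply: val_inj; rewrite /= !modn_small // (leq_trans _ N4).
by case/and3P => _ _; rewrite subr_eq0 eq_sym.
Qed.

(* The inverse of the Vandermonde matrix (label j ^+ t), t : bool, j \in {o0, o2}. *)
Definition vdm_inv (t : bool) (j : 'I_N) : F :=
  (if j == o0 then (if t then - 1 else label o2) else if t then 1 else - label o0)
  / (label o2 - label o0).

Definition cycle_kernel_inv := kronAI a (fun (_ : 'I_N) (_ : bool) => 0)
  (fun j t => (j == o0)%:R * vdm_inv t o0 + (j == o2)%:R * vdm_inv t o2).

Lemma cycle_kernel_invP u u' : \sum_x cycle_kernel u x * cycle_kernel_inv x u' = (u == u')%:R.
Proof.
move: u u' => [x t] [y t']; rewrite (mul_kronAI a_inv.2) /= !big_split /=.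
rewrite !sum_delta2 !big1 => [|i _|i _]; rewrite ?mulr0 // /= xpair_eqE.
have D := label20_neq0; rewrite /vdm_inv /=.
by case: t; case: t'; case: (x == y); rewrite /= ?mulr1n ?mulr0n; field.
Qed.

Let eC_sym : symmetric (cart_prod e (cycle_graph N)) :=
  cart_prod_sym e_sym (@cycle_graph_sym N).

Lemma two_colouring_cycle :
  two_colouring (cart_prod e (cycle_graph N)) (fun x => col x.1 (+) odd x.2).
Proof.
move=> [u i] [v j]; rewrite /cart_prod cycle_graphE /=.
case/orP => [/andP [/eqP <- /orP [] /eqP ->] | /andP [/eqP <- /ecol]].
- by rewrite odd_ordS //; case: (col u); case: (odd i).
- by rewrite odd_ordS //; case: (col u); case: (odd j).
- by case: (col u); case: (col v); case: (odd i).
Qed.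

Lemma forcing_set_cycle_ge M S : perfect_matching (cart_prod e (cycle_graph N)) M ->
  forcing_set (cart_prod e (cycle_graph N)) M S -> (#|V| <= #|S|)%N.
Proof.
move=> pmM fS.
have := rank_forcing_bound two_colouring_cycle eC_sym pmM fS cycle_wadj_cart_prod.
have := rank_left_kernel cycle_kernelP cycle_kernel_invP; move: (\rank _) => rk.
by rewrite !card_prod card_bool card_ord; lia.
Qed.

Theorem forcing_number_cycle : forcing_number_is (cart_prod e (cycle_graph N)) #|V|.
Proof.
split; last exact: forcing_set_cycle_ge.
exists (cycle_matching N col), (cycle_forcing col N4); split.
  exact: perfect_matching_cycle.
by split; [apply: forcing_cycle | apply: card_cycle_forcing].
Qed.

End CycleProduct.

Theorem corollary2p2 (F : fieldType) (T : finType) (e : rel T) :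
  (exists s : seq F, uniq s /\ (4 <= size s)%N) ->
  simple_graph e -> bipartite e -> IF_nonempty F e ->
  forall d : nat, (0 < d)%N ->
    [/\ IF_nonempty F (cart_prod e (hypercube d)),
        forall n, forcing_number_is (cart_prod e (hypercube d)) n ->
                  (4 * n = 2 ^ d * #|T|)%N,
        (exists n, forcing_number_is (cart_prod e (hypercube d)) n) &
        forall k : nat, (2 <= k)%N ->
          forcing_number_is
            (cart_prod (cart_prod e (hypercube d)) (cycle_graph (2 * k)))
            (2 ^ d * #|T|)%N].
Proof.
move=> F4 [e_sym _] [col ecol] /IF_nonemptyP [a a_inv] [//|d] _.
have [al [al0 al1]] := exists_neq0_sqr_neq1 F4.
have wadj_cube := inv_wadj_hypercube a_inv al0 al1.
have colour_cube := two_colouring_hypercube ecol.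
have [[a_d a_d_inv] [c_d ec_d]] := (wadj_cube d, colour_cube d).
have [[a' a'_inv] [c' ec']] := (wadj_cube d.+1, colour_cube d.+1).
have [n fn n_card] := forcing_number_hypercubeS e_sym ec_d a_d_inv.
split; first by apply/IF_nonemptyP; exists a'.
- by move=> m /forcing_number_uniq /(_ fn) ->; rewrite expnS -mulnA -n_card; lia.
- by exists n.
move=> k k2; have [s [s_uniq s_size]] := F4.
have N4 : (4 <= 2 * k)%N by lia.
have N_even : ~~ odd (2 * k) by rewrite oddM.
have := forcing_number_cycle N4 N_even s_uniq s_size a'_inv ec' (cart_hypercube_sym e_sym).
by rewrite card_prod card_ffun card_bool card_ord (mulnC #|T|).
Qed.
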